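(* $c(9)\ge 6$.
   Context: $\mathbb{F}_q$ is the finite field with $q$ elements. Hamming distance $d(u,v)=|\{i:u_i\ne v_i\}|$ on $\mathbb{F}_q^3$; $B(u)=\{v:d(u,v)\le1\}$; $E(u)=\bigcup_{\lambda\in\mathbb{F}_q}B(\lambda u)$. A set $\mathcal{H}\subseteq\mathbb{F}_q^3$ is a short covering if $\bigcup_{h\in\mathcal{H}}E(h)=\mathbb{F}_q^3$; $c(q)$ is the minimum cardinality of a short covering of $\mathbb{F}_q^3$. *)

From HB Require Import structures.
From mathcomp Require Import all_boot all_order all_algebra all_field.
Set Implicit Arguments. Unset Strict Implicit. Unset Printing Implicit Defensive.
Import GRing.Theory.
Local Open Scope ring_scope.

Definition hamming (F : finFieldType) (u v : 'rV[F]_3) : nat :=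
  #|[set i : 'I_3 | u 0 i != v 0 i]|.

Definition ball1 (F : finFieldType) (u : 'rV[F]_3) : {set 'rV[F]_3} :=
  [set v | (hamming u v <= 1)%N].

Definition Eset (F : finFieldType) (u : 'rV[F]_3) : {set 'rV[F]_3} :=
  \bigcup_(lam : F) ball1 (lam *: u).

Definition short_covering (F : finFieldType) (H : {set 'rV[F]_3}) : Prop :=
  \bigcup_(h in H) Eset h = [set: 'rV[F]_3].

From mathcomp Require Import all_boot all_order all_algebra all_field.
From mathcomp Require Import ring zify.

(* Write q = #|F| and F* = F \ {0}.  If h \in H covers v via lambda, then
   lambda h and v agree on two coordinates i < j.  When v_i, v_j are nonzero
   this forces v_j / v_i = h_j / h_i, so the ratio v_j / v_i lies in the set
   R_ij of ratios h_j / h_i of H, of size at most the number of h \in H with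
   h_i, h_j nonzero.  Covering the vectors (1, y, z) of the torus F* x F*
   gives: y \in R_01, or z \in R_02, or z / y \in R_12.  If each R_ij misses
   a point of F*, fixing that point shows that any two of the R_ij have total
   size at least q - 1, so |R_01| + |R_02| + |R_12| >= 3(q - 1)/2.  Covering
   the vectors with exactly one zero coordinate k forces some nonzero h \in H
   with h_k = 0, since otherwise the complementary R_ij would contain every
   nonzero scalar.  So at least two elements of H have a zero coordinate, and
   such an element has at most one pair of nonzero coordinates instead of
   three.  Counting gives 6|H| >= 3(q - 1) + 8 whenever |H| < q - 1, which
   for q = 9 means |H| >= 6. *)

Set Implicit Arguments. Unset Strict Implicit. Unset Printing Implicit Defensive.
Import GRing.Theory.
Local Open Scope ring_scope.

Lemma leq_card_setU_imset (T T' : finType) (N A : {set T}) (B : {set T'})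
    (f : T' -> T) :
  N \subset A :|: f @: B -> (#|N| <= #|A| + #|B|)%N.
Proof.
move/subset_leq_card/leq_trans; apply; apply: leq_trans (leq_card_setU _ _).1 _.
by rewrite leq_add2l leq_imset_card.
Qed.

Lemma exists_nonzero_notin (F : finFieldType) (S : {set F}) :
  (#|S| < #|F|.-1)%N -> exists2 x, x != 0 & x \notin S.
Proof.
move=> small; have /subsetPn[x] : ~~ ([set~ 0] \subset S).
  by apply: contraTN small => /subset_leq_card; rewrite cardsC1 -leqNgt.
by rewrite in_setC1; exists x.
Qed.

Lemma torus_cover_card (F : finFieldType) (R C D : {set F}) :
  (forall y z : F, y != 0 -> z != 0 -> [|| y \in R, z \in C | z / y \in D]) ->
  (#|R| < #|F|.-1)%N -> (#|C| < #|F|.-1)%N -> (#|D| < #|F|.-1)%N ->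
  (3 * #|F|.-1 <= 2 * (#|R| + #|C| + #|D|))%N.
Proof.
move=> cover smallR smallC smallD.
pose N : {set F} := [set~ 0]; rewrite -(cardsC1 (0 : F)) -/N.
have RD : (#|N| <= #|R| + #|D|)%N.
  have [z0 z0_neq0 z0_notC] := exists_nonzero_notin smallC.
  apply: (@leq_card_setU_imset _ _ _ _ _ (fun t => z0 / t)).
  apply/subsetP => y; rewrite in_setC1 inE => y_neq0.
  case/or3P: (cover y z0 y_neq0 z0_neq0) => [-> // | z0C | yD].
    by rewrite z0C in z0_notC.
  by apply/orP; right; apply/imsetP; exists (z0 / y) => //; field; apply/andP.
have CD : (#|N| <= #|C| + #|D|)%N.
  have [y0 y0_neq0 y0_notR] := exists_nonzero_notin smallR.
  apply: (@leq_card_setU_imset _ _ _ _ _ (fun t => t * y0)).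
  apply/subsetP => z; rewrite in_setC1 inE => z_neq0.
  case/or3P: (cover y0 z y0_neq0 z_neq0) => [y0R | -> // | zD].
    by rewrite y0R in y0_notR.
  by apply/orP; right; apply/imsetP; exists (z / y0) => //; field.
have RC : (#|N| <= #|R| + #|C|)%N.
  have [t0 t0_neq0 t0_notD] := exists_nonzero_notin smallD.
  apply: (@leq_card_setU_imset _ _ _ _ _ (fun z => z / t0)).
  apply/subsetP => y; rewrite in_setC1 inE => y_neq0.
  have ty_neq0 : t0 * y != 0 by rewrite mulf_neq0.
  case/or3P: (cover y (t0 * y) y_neq0 ty_neq0) => [-> // | tyC | tD].
    by apply/orP; right; apply/imsetP; exists (t0 * y) => //; field.
  by rewrite mulfK // in tD; rewrite tD in t0_notD.
lia.
Qed.

Lemma ord3_cases (i : 'I_3) : [\/ i = 0, i = 1 | i = 2].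
Proof.
by case: i => [[|[|[|//]]]] ?; [apply: Or31 | apply: Or32 | apply: Or33]; apply: val_inj.
Qed.

Lemma ord3_lt_cases (i j : 'I_3) :
  (i < j)%N -> [\/ i = 0 /\ j = 1, i = 0 /\ j = 2 | i = 1 /\ j = 2].
Proof. by case: (ord3_cases i) => ->; case: (ord3_cases j) => -> //= _; constructor. Qed.

Lemma ord3_lt_avoid_uniq (i j i' j' k : 'I_3) :
  (i < j)%N -> (i' < j')%N -> i != k -> j != k -> i' != k -> j' != k ->
  i' = i /\ j' = j.
Proof.
case/ord3_lt_cases=> [[-> ->]|[-> ->]|[-> ->]];
case/ord3_lt_cases=> [[-> ->]|[-> ->]|[-> ->]];
by case: (ord3_cases k) => ->.
Qed.

Lemma row3_eq0 (F : finFieldType) (u : 'rV[F]_3) :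
  u 0 0 = 0 -> u 0 1 = 0 -> u 0 2 = 0 -> u = 0.
Proof. by move=> u0 u1 u2; apply/rowP => i; rewrite mxE; case: (ord3_cases i) => ->. Qed.

Section ShortCovering.

Variable F : finFieldType.
Implicit Types (H : {set 'rV[F]_3}) (u v : 'rV[F]_3) (lam : F).

Definition nonzero_at2 H (i j : 'I_3) :=
  [set u in H | (u 0 i != 0) && (u 0 j != 0)].

Definition ratios H (i j : 'I_3) : {set F} :=
  [set u 0 j / u 0 i | u : 'rV[F]_3 in nonzero_at2 H i j].

Arguments nonzero_at2 H (i j)%_R.
Arguments ratios H (i j)%_R.

Definition zero_at H (k : 'I_3) := [set u in H | (u 0 k == 0) && (u != 0)].

Definition has_zero H :=
  [set u in H | [|| u 0 0 == 0, u 0 1 == 0 | u 0 2 == 0]].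

Lemma short_covering_pair H v : short_covering H ->
  exists2 u, u \in H & exists lam, exists i j : 'I_3,
    [/\ (i < j)%N, lam * u 0 i = v 0 i & lam * u 0 j = v 0 j].
Proof.
move=> covH; have : v \in \bigcup_(h in H) Eset h by rewrite covH inE.
case/bigcupP => u uH /bigcupP[lam _]; rewrite inE => dist_le1.
exists u => //; exists lam.
pose agree : {set 'I_3} := [set i | (lam *: u) 0 i == v 0 i].
have /card_gt1P[i [j [+ + ij]]] : (1 < #|agree|)%N.
  have := cardC agree; rewrite card_ord.
  suff -> : #|[predC agree]| = hamming (lam *: u) v.
    by move: dist_le1; move: (hamming _ _) #|agree| => d a; lia.
  by apply: eq_card => i; rewrite !inE.
rewrite !inE !mxE => /eqP ei /eqP ej.
case: (ltngtP i j) => [lt_ij | lt_ji | /val_inj eq_ij].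
- by exists i, j.
- by exists j, i.
- by rewrite eq_ij eqxx in ij.
Qed.

Lemma scaled_ratio_in_ratios H u lam (i j : 'I_3) (x y : F) : u \in H ->
  lam * u 0 i = x -> lam * u 0 j = y -> x != 0 -> y != 0 ->
  y / x \in ratios H i j.
Proof.
move=> uH <- <-; rewrite !mulf_eq0 !negb_or => /andP[lam_neq0 ui_neq0] /andP[_ uj_neq0].
apply/imsetP; exists u; first by rewrite inE uH ui_neq0 uj_neq0.
by field; apply/andP.
Qed.

Lemma scaled_zero_in_zero_at H u lam (i k : 'I_3) (x : F) : u \in H ->
  lam * u 0 i = x -> lam * u 0 k = 0 -> x != 0 -> u \in zero_at H k.
Proof.
move=> uH <- /eqP; rewrite mulf_eq0 mulf_eq0 negb_or => + /andP[lam_neq0 ui_neq0].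
rewrite (negPf lam_neq0) /= => uk0; rewrite inE uH uk0 /=.
by apply: contra ui_neq0 => /eqP->; rewrite mxE.
Qed.

Lemma short_covering_torus H (y z : F) : short_covering H ->
  y != 0 -> z != 0 -> [|| y \in ratios H 0 1, z \in ratios H 0 2 | z / y \in ratios H 1 2].
Proof.
move=> covH y_neq0 z_neq0; pose v : 'rV[F]_3 := \row_i nth 0 [:: 1; y; z] i.
have [u uH [lam [i [j [lt_ij ei ej]]]]] := short_covering_pair v covH.
have := scaled_ratio_in_ratios uH ei ej.
case/ord3_lt_cases: lt_ij ei ej => [[-> ->]|[-> ->]|[-> ->]] _ _; rewrite !mxE /=.
- by rewrite divr1 => ->; rewrite ?oner_neq0.
- by rewrite divr1 => ->; rewrite ?oner_neq0 ?orbT.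
- by move=> ->; rewrite ?orbT.
Qed.

Lemma card_ratios H (i j : 'I_3) : (#|ratios H i j| <= #|nonzero_at2 H i j|)%N.
Proof. exact: leq_imset_card. Qed.

Lemma card_nonzero_at2 H (i j : 'I_3) : (#|nonzero_at2 H i j| <= #|H|)%N.
Proof. by apply/subset_leq_card/subsetP => u; rewrite inE => /andP[]. Qed.

Lemma short_covering_zero_at H (i j k : 'I_3) : short_covering H ->
  (#|H| < #|F|.-1)%N -> (i < j)%N -> i != k -> j != k -> zero_at H k != set0.
Proof.
move=> covH small lt_ij ik jk; apply/negP => /eqP no_zero.
suff : (#|F|.-1 <= #|ratios H i j|)%N.
  by have := leq_trans (card_ratios H i j) (card_nonzero_at2 H i j); lia.
rewrite -(cardsC1 (0 : F)); apply/subset_leq_card/subsetP => y; rewrite in_setC1 => y_neq0.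
pose v : 'rV[F]_3 := \row_l (if l == k then 0 else if l == i then 1 else y).
have vk : v 0 k = 0 by rewrite mxE eqxx.
have v_neq0 l : l != k -> v 0 l != 0.
  by move=> lk; rewrite mxE (negPf lk); case: (l == i); rewrite ?oner_neq0.
have [u uH [lam [i' [j' [lt' ei ej]]]]] := short_covering_pair v covH.
have avoid l l' : lam * u 0 l = v 0 l -> lam * u 0 l' = v 0 l' -> l != l' -> l' != k.
  move=> el el' ll'; apply/eqP => l'k; rewrite l'k vk in el'.
  have lk : l != k by rewrite -l'k.
  by have := scaled_zero_in_zero_at uH el el' (v_neq0 l lk); rewrite no_zero inE.
have ij' : i' != j' by apply: contraTneq lt' => ->; rewrite ltnn.
have ji' : j' != i' by rewrite eq_sym.
have [eqi eqj] := ord3_lt_avoid_uniq lt_ij lt' ik jk (avoid _ _ ej ei ji') (avoid _ _ ei ej ij').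
move: ei ej; rewrite eqi eqj => ei ej.
have := scaled_ratio_in_ratios uH ei ej (v_neq0 _ ik) (v_neq0 _ jk).
have ji : j != i by apply: contraTneq lt_ij => ->; rewrite ltnn.
by rewrite !mxE (negPf ik) (negPf jk) (negPf ji) eqxx divr1.
Qed.

Lemma card_nonzero_at2_has_zero H :
  (#|nonzero_at2 H 0 1| + #|nonzero_at2 H 0 2| + #|nonzero_at2 H 1 2|
    + 2 * #|has_zero H| <= 3 * #|H|)%N.
Proof.
rewrite /nonzero_at2 /has_zero -!sum1dep_card !big_mkcondr /= big_distrr /=.
rewrite -!big_split /= -[#|H|]sum1_card big_distrr /= leq_sum // => u _.
by case: (u 0 0 == 0); case: (u 0 1 == 0); case: (u 0 2 == 0).
Qed.

Lemma two_le_card_has_zero H :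
  (forall k : 'I_3, zero_at H k != set0) -> (1 < #|has_zero H|)%N.
Proof.
move=> zero_at_neq0.
have [a0 a0Z] := set0Pn _ (zero_at_neq0 0).
have [a1 a1Z] := set0Pn _ (zero_at_neq0 1).
have [a2 a2Z] := set0Pn _ (zero_at_neq0 2).
have has_zeroW k a : a \in zero_at H k -> a \in has_zero H.
  rewrite !inE => /andP[-> /andP[ak _]].
  by case: (ord3_cases k) ak => -> ->; rewrite ?orbT.
apply/card_gt1P; case: (eqVneq a0 a1) => [e01 | ne01].
  case: (eqVneq a0 a2) => [e02 | ne02].
    move: a0Z a1Z a2Z; rewrite -e01 -e02 !inE => /andP[_ /andP[/eqP z0 a0_neq0]].
    move=> /andP[_ /andP[/eqP z1 _]] /andP[_ /andP[/eqP z2 _]].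
    by rewrite (row3_eq0 z0 z1 z2) eqxx in a0_neq0.
  by exists a0, a2; rewrite ne02 (has_zeroW _ _ a0Z) (has_zeroW _ _ a2Z).
by exists a0, a1; rewrite ne01 (has_zeroW _ _ a0Z) (has_zeroW _ _ a1Z).
Qed.

Lemma short_covering_card_bound H : short_covering H ->
  (#|H| < #|F|.-1)%N -> (3 * #|F|.-1 + 8 <= 6 * #|H|)%N.
Proof.
move=> covH small.
have ratios_small i j : (#|ratios H i j| < #|F|.-1)%N.
  exact: leq_ltn_trans (leq_trans (card_ratios H i j) (card_nonzero_at2 H i j)) small.
have := torus_cover_card (fun y z => short_covering_torus covH)
  (ratios_small _ _) (ratios_small _ _) (ratios_small _ _).
have zeros : (1 < #|has_zero H|)%N.
  apply: two_le_card_has_zero => k.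
  case: (ord3_cases k) => ->.
  - exact: (@short_covering_zero_at H 1 2).
  - exact: (@short_covering_zero_at H 0 2).
  - exact: (@short_covering_zero_at H 0 1).
have := card_nonzero_at2_has_zero H.
have := card_ratios H 0 1; have := card_ratios H 0 2; have := card_ratios H 1 2.
lia.
Qed.

End ShortCovering.

Theorem proposition20 (F : finFieldType) (hF : #|F| = 9%N)
  (H : {set 'rV[F]_3}) (hH : short_covering H) : (6 <= #|H|)%N.
Proof.
have q1 : #|F|.-1 = 8%N by rewrite hF.
have [small | ] := ltnP #|H| #|F|.-1; last by rewrite q1; lia.
by have := short_covering_card_bound hH small; rewrite q1; lia.
Qed.
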